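(* Let $X$ be a sufficiently large real number, $P=\lfloor 5X\rfloor$, and $f(\alpha)=\sum_{1\le m\le X}e(m^2\alpha)$. For integers $q\ge1$, $a$, $n$ let $S(q,a,n)=\sum_{x=1}^q e\big(\frac{ax^2+nx}{q}\big)$ and $S(q,a)=S(q,a,0)$. Suppose that $(a,q)=1$, $q\le P$ and $|\beta|\le \frac{1}{qP}$. Then there are complex numbers $E(b,q,\beta)$ (for integers $-3q/2<b\le 3q/2$, not depending on $a$) such that $$f\Big(\frac{a}{q}+\beta\Big)=\frac{S(q,a)}{q}\int_0^Xe(x^2\beta)\,dx+\sum_{-3q/2<b\le 3q/2}S(q,a,b)E(b,q,\beta)$$ and $$\sum_{-3q/2<b\le 3q/2}|E(b,q,\beta)|\ll \log (q+2),$$ with an absolute implied constant.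
   Context: $e(z)=e^{2\pi i z}$; $\lfloor x\rfloor$ is the greatest integer not exceeding $x$. *)

From Stdlib Require Import Reals ZArith.
From Coquelicot Require Import Coquelicot.
Open Scope R_scope.

Definition e (t : R) : C := (cos (2 * PI * t), sin (2 * PI * t)).

(* greatest integer not exceeding x: up x is the unique integer with x < up x <= x + 1 *)
Definition floorR (x : R) : Z := (up x - 1)%Z.

(* zsum lo hi F = sum over integers b with lo < b <= hi of F b *)
Definition zsum {G : AbelianMonoid} (lo hi : Z) (F : Z -> G) : G :=
  sum_n_m (fun k : nat => F (lo + Z.of_nat k)%Z) 1 (Z.to_nat (hi - lo)).

Definition fX (X alpha : R) : C :=
  sum_n_m (fun m : nat => e (INR m ^ 2 * alpha)) 1 (Z.to_nat (floorR X)).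

Definition S3 (q a n : Z) : C :=
  sum_n_m (fun x : nat => e ((IZR a * INR x ^ 2 + IZR n * INR x) / IZR q)) 1 (Z.to_nat q).

Definition S2 (q a : Z) : C := S3 q a 0.

(* range -3q/2 < b <= 3q/2: lower bound floor(-3q/2), upper bound floor(3q/2) *)
Definition blo (q : Z) : Z := Z.div (-3 * q) 2.
Definition bhi (q : Z) : Z := Z.div (3 * q) 2.

(** Write [T_b = sum_{m <= X} e(beta m^2 - b m / q)]. Detecting the residue class of [m]
    modulo [q] with additive characters gives
    [f(a/q + beta) = q^-1 sum_{0 <= b < q} S(q,a,b) T_b], so one may take [E(b) = T_b / q]
    for [0 < b < q], [E(0) = (T_0 - int_0^X e(x^2 beta) dx) / q] and [E(b) = 0] otherwise.
    Since [|beta| <= 1/(qP)] and [P ~ 5X], the phase increments [(2m+1) beta - b/q] of [T_b]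
    stay at distance about [b(q-b)/q^2] from the integers, and Abel summation against
    [(e(D) - 1)^-1 = -1/2 - (i/2) cot(pi D)] (Kusmin-Landau) gives [|T_b| << q/b + q/(q-b)].
    For [b = 0] the pole [1/(2 pi i D)] of that coefficient reproduces the integral over
    each [[m, m+1]] up to [O(|beta|)], and the remaining part is [O(1)]. Summing the
    harmonic series gives [sum_b |E(b)| << log q]. *)

From Stdlib Require Import Reals ZArith Lra Lia Psatz.
From Coquelicot Require Import Coquelicot.
Open Scope R_scope.

(* Coquelicot's generic sum lemmas produce equalities in [AbelianMonoid.sort _];
   [ring] and [field] only recognise them at type [C] or [R]. *)
Ltac as_C_eq := match goal with |- ?a = ?b => change (@eq C a b) end.
Ltac as_R_eq := match goal with |- ?a = ?b => change (@eq R a b) end.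

Lemma pair_eq (a b c d : R) : a = c -> b = d -> (a, b) = (c, d).
Proof. intros -> ->; reflexivity. Qed.

Lemma e_add s t : e (s + t) = (e s * e t)%C.
Proof.
  unfold e, Cmult; simpl.
  replace (2 * PI * (s + t)) with (2 * PI * s + 2 * PI * t) by ring.
  rewrite cos_plus, sin_plus. apply pair_eq; ring.
Qed.

Lemma e_0 : e 0 = 1%C.
Proof. unfold e, RtoC. rewrite Rmult_0_r, cos_0, sin_0. reflexivity. Qed.

Lemma e_IZR k : e (IZR k) = 1%C.
Proof.
  unfold e, RtoC.
  assert (Hs : sin (IZR k * PI) = 0) by (apply sin_eq_0_1; exists k; ring).
  replace (2 * PI * IZR k) with (2 * (IZR k * PI)) by ring.
  rewrite cos_2a_sin, sin_2a, Hs. apply pair_eq; ring.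
Qed.

Lemma e_eq_1 t : e t = 1%C -> exists k, t = IZR k.
Proof.
  unfold e, RtoC. intros H. injection H as Hc Hs.
  replace (2 * PI * t) with (2 * (t * PI)) in Hc by ring.
  rewrite cos_2a_sin in Hc.
  assert (H0 : sin (t * PI) = 0) by nra.
  destruct (sin_eq_0_0 _ H0) as [k Hk]. exists k.
  apply Rmult_eq_reg_r with PI; [exact Hk | apply PI_neq0].
Qed.

Lemma e_plus_IZR t k : e (t + IZR k) = e t.
Proof. rewrite e_add, e_IZR. apply Cmult_1_r. Qed.

Lemma Cmod_e t : Cmod (e t) = 1.
Proof.
  unfold e, Cmod; simpl.
  pose proof (sin2_cos2 (2 * PI * t)) as H. unfold Rsqr in H.
  replace (cos (2 * PI * t) * (cos (2 * PI * t) * 1) + sin (2 * PI * t) * (sin (2 * PI * t) * 1))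
    with 1 by lra.
  apply sqrt_1.
Qed.

Lemma Cmod_le_Rabs_add (u v : R) : Cmod (u, v) <= Rabs u + Rabs v.
Proof.
  unfold Cmod; simpl.
  rewrite <- (sqrt_Rsqr (Rabs u + Rabs v)) by (pose proof (Rabs_pos u); pose proof (Rabs_pos v); lra).
  apply sqrt_le_1_alt. unfold Rsqr.
  pose proof (Rabs_pos u); pose proof (Rabs_pos v).
  pose proof (Rsqr_abs u). pose proof (Rsqr_abs v). unfold Rsqr in *. nra.
Qed.

Lemma Rabs_sin_le x : Rabs (sin x) <= Rabs x.
Proof.
  assert (Hpos : forall y, 0 <= y -> Rabs (sin y) <= y).
  { intros y Hy. pose proof (SIN_bound y). pose proof PI2_3_2.
    destruct (Rle_lt_dec y 1).
    - destruct (Req_dec y 0) as [->|]; [rewrite sin_0, Rabs_R0; lra|].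
      assert (0 <= sin y) by (apply sin_ge_0; lra).
      pose proof (sin_lt_x y ltac:(lra)). rewrite Rabs_right; lra.
    - apply Rabs_le. lra. }
  destruct (Rle_lt_dec 0 x).
  - rewrite (Rabs_right x) by lra. auto.
  - rewrite (Rabs_left x), <- Rabs_Ropp, <- sin_neg by lra. apply Hpos; lra.
Qed.

Lemma Rabs_half x : Rabs (x / 2) = Rabs x / 2.
Proof. unfold Rdiv. rewrite Rabs_mult, (Rabs_right (/ 2)) by lra. reflexivity. Qed.

Lemma cos_lipschitz x y : Rabs (cos x - cos y) <= Rabs (x - y).
Proof.
  rewrite form2, !Rabs_mult.
  pose proof (Rabs_sin_le ((x - y) / 2)) as H. rewrite Rabs_half in H.
  pose proof (SIN_bound ((x + y) / 2)).
  assert (Rabs (sin ((x + y) / 2)) <= 1) by (apply Rabs_le; lra).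
  replace (Rabs (-2)) with 2 by (rewrite Rabs_left; lra).
  pose proof (Rabs_pos (sin ((x - y) / 2))). pose proof (Rabs_pos (sin ((x + y) / 2))).
  nra.
Qed.

Lemma sin_lipschitz x y : Rabs (sin x - sin y) <= Rabs (x - y).
Proof.
  rewrite form4, !Rabs_mult.
  pose proof (Rabs_sin_le ((x - y) / 2)) as H. rewrite Rabs_half in H.
  pose proof (COS_bound ((x + y) / 2)).
  assert (Rabs (cos ((x + y) / 2)) <= 1) by (apply Rabs_le; lra).
  replace (Rabs 2) with 2 by (rewrite Rabs_right; lra).
  pose proof (Rabs_pos (sin ((x - y) / 2))). pose proof (Rabs_pos (cos ((x + y) / 2))).
  nra.
Qed.

Lemma sum_n_m_zero_loc {G : AbelianMonoid} (F : nat -> G) l m :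
  (forall k, (l <= k <= m)%nat -> F k = zero) -> sum_n_m F l m = zero.
Proof. intros H. rewrite (sum_n_m_ext_loc _ (fun _ => zero)) by auto. apply sum_n_m_const_zero. Qed.

Lemma sum_n_m_swap {G : AbelianMonoid} (F : nat -> nat -> G) l1 m1 l2 m2 :
  sum_n_m (fun i => sum_n_m (fun j => F i j) l2 m2) l1 m1 =
  sum_n_m (fun j => sum_n_m (fun i => F i j) l1 m1) l2 m2.
Proof.
  induction m1 as [|m1 IH].
  - destruct l1.
    + rewrite sum_n_n. apply sum_n_m_ext. intros. rewrite sum_n_n. reflexivity.
    + rewrite sum_n_m_zero by lia. symmetry. apply sum_n_m_zero_loc.
      intros. apply sum_n_m_zero. lia.
  - destruct (le_lt_dec l1 (S m1)).
    + rewrite sum_n_Sm by lia.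
      rewrite (sum_n_m_ext (fun j => sum_n_m (fun i => F i j) l1 (S m1))
                           (fun j => plus (sum_n_m (fun i => F i j) l1 m1) (F (S m1) j))).
      * rewrite sum_n_m_plus, IH. reflexivity.
      * intros. apply sum_n_Sm. lia.
    + rewrite sum_n_m_zero by lia. symmetry. apply sum_n_m_zero_loc.
      intros. apply sum_n_m_zero. lia.
Qed.

Lemma sum_n_m_shift {G : AbelianMonoid} (F : nat -> G) a m :
  sum_n_m F a (a + m) = sum_n_m (fun j => F (a + j)%nat) 0 m.
Proof.
  revert F. induction a as [|a IH]; intros F.
  - reflexivity.
  - replace (S a + m)%nat with (S (a + m)) by lia. rewrite <- sum_n_m_S, IH.
    apply sum_n_m_ext. intros. f_equal; lia.
Qed.

Lemma sum_n_m_reflect {G : AbelianMonoid} (g : nat -> G) n :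
  sum_n_m (fun b => g (S n - b)%nat) 1 n = sum_n_m g 1 n.
Proof.
  induction n as [|n IH].
  - rewrite !sum_n_m_zero by lia. reflexivity.
  - rewrite (sum_Sn_m _ 1 (S n)), (sum_n_Sm g 1 n), <- sum_n_m_S by lia.
    rewrite (sum_n_m_ext (fun k => g (S (S n) - S k)%nat) (fun b => g (S n - b)%nat)) by (intros; f_equal; lia).
    rewrite IH. replace (S (S n) - 1)%nat with (S n) by lia. apply plus_comm.
Qed.

Lemma sum_n_m_periodic_shift {G : AbelianMonoid} (H : nat -> G) (Q : nat) :
  (1 <= Q)%nat -> (forall x, H (x + Q)%nat = H x) ->
  forall k, sum_n_m H 1 Q = sum_n_m (fun x => H (x + k)%nat) 1 Q.
Proof.
  intros HQ Hp k. induction k as [|k IH].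
  - apply sum_n_m_ext. intros. f_equal. lia.
  - rewrite IH.
    rewrite (sum_n_m_ext (fun x => H (x + S k)%nat) (fun x => H (S x + k)%nat)) by (intros; f_equal; lia).
    rewrite (sum_n_m_S (fun y => H (y + k)%nat)).
    destruct Q as [|Q]; [lia|].
    rewrite (sum_n_Sm _ 2 (S Q)), (sum_Sn_m _ 1 (S Q)) by lia.
    replace (S (S Q) + k)%nat with ((1 + k) + S Q)%nat by lia.
    rewrite Hp. apply plus_comm.
Qed.

Lemma sum_n_m_le_loc (F G : nat -> R) l m :
  (forall k, (l <= k <= m)%nat -> F k <= G k) -> sum_n_m F l m <= sum_n_m G l m.
Proof.
  intros H. induction m as [|m IH].
  - destruct l.
    + rewrite !sum_n_n. apply H. lia.
    + rewrite !sum_n_m_zero by lia. apply Rle_refl.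
  - destruct (le_lt_dec l (S m)).
    + rewrite !sum_n_Sm by lia. apply Rplus_le_compat; [|apply H; lia].
      destruct (le_lt_dec l m).
      * apply IH. intros. apply H. lia.
      * rewrite !sum_n_m_zero by lia. apply Rle_refl.
    + rewrite !sum_n_m_zero by lia. apply Rle_refl.
Qed.

Lemma Cmod_sum_n_m (F : nat -> C) l m :
  Cmod (sum_n_m F l m) <= sum_n_m (fun k => Cmod (F k)) l m.
Proof.
  induction m as [|m IH].
  - destruct l.
    + rewrite !sum_n_n. apply Rle_refl.
    + rewrite !sum_n_m_zero by lia. apply Req_le, Cmod_0.
  - destruct (le_lt_dec l (S m)).
    + rewrite !sum_n_Sm by lia. eapply Rle_trans; [apply Cmod_triangle|].
      apply Rplus_le_compat_r, IH.
    + rewrite !sum_n_m_zero by lia. apply Req_le, Cmod_0.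
Qed.

Lemma Rabs_sum_n_m_minus (f g : nat -> R) l N :
  Rabs (sum_n_m f l N - sum_n_m g l N) <= sum_n_m (fun m => Rabs (f m - g m)) l N.
Proof.
  induction N as [|N IH].
  - destruct l.
    + rewrite !sum_n_n. apply Rle_refl.
    + rewrite !sum_n_m_zero by lia. unfold zero; simpl. rewrite Rminus_0_r, Rabs_R0. apply Rle_refl.
  - destruct (le_lt_dec l (S N)).
    + rewrite !sum_n_Sm by lia. unfold plus; simpl.
      replace (sum_n_m f l N + f (S N) - (sum_n_m g l N + g (S N))) with
        ((sum_n_m f l N - sum_n_m g l N) + (f (S N) - g (S N))) by ring.
      eapply Rle_trans; [apply Rabs_triang | lra].
    + rewrite !sum_n_m_zero by lia. unfold zero; simpl. rewrite Rminus_0_r, Rabs_R0. apply Rle_refl.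
Qed.

Lemma Csum_mult_l (c : C) (F : nat -> C) l m :
  sum_n_m (fun k => (c * F k)%C) l m = (c * sum_n_m F l m)%C.
Proof. apply (sum_n_m_mult_l (K := C_Ring)). Qed.

Lemma Csum_mult_r (c : C) (F : nat -> C) l m :
  sum_n_m (fun k => (F k * c)%C) l m = (sum_n_m F l m * c)%C.
Proof. apply (sum_n_m_mult_r (K := C_Ring)). Qed.

Lemma Csum_plus (F G : nat -> C) l m :
  sum_n_m (fun k => (F k + G k)%C) l m = (sum_n_m F l m + sum_n_m G l m)%C.
Proof. apply (sum_n_m_plus (G := C_AbelianMonoid)). Qed.

Lemma Rsum_plus (F G : nat -> R) l m :
  sum_n_m (fun k => F k + G k) l m = sum_n_m F l m + sum_n_m G l m.
Proof. apply (sum_n_m_plus (G := R_AbelianMonoid)). Qed.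

Lemma Rsum_mult_l (c : R) (F : nat -> R) l m :
  sum_n_m (fun k => c * F k) l m = c * sum_n_m F l m.
Proof. apply (sum_n_m_mult_l (K := R_Ring)). Qed.

Lemma Csum_const (r : R) l m : (l <= S m)%nat ->
  sum_n_m (fun _ => RtoC r) l m = RtoC (INR (S m - l) * r).
Proof.
  intros Hl. induction m as [|m IH].
  - destruct l as [|[|l]]; try lia.
    + rewrite sum_n_n. simpl. f_equal. ring.
    + rewrite sum_n_m_zero by lia. change (@zero C_AbelianMonoid) with (RtoC 0). simpl. f_equal. ring.
  - destruct (Nat.eq_dec l (S (S m))) as [->|Hne].
    + rewrite sum_n_m_zero by lia. change (@zero C_AbelianMonoid) with (RtoC 0).
      rewrite Nat.sub_diag. simpl. f_equal. ring.
    + rewrite sum_n_Sm, IH by lia. rewrite <- RtoC_plus. f_equal.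
      replace (S (S m) - l)%nat with (S (S m - l)) by lia. rewrite S_INR. ring.
Qed.

(** * Splitting [f] into residue classes *)

Definition dvd_ind (Q : nat) (j : Z) : C :=
  if (j mod Z.of_nat Q =? 0)%Z then 1%C else 0%C.

Lemma sum_e_full_period (Q : nat) (t : R) : (1 <= Q)%nat ->
  e (INR Q * t) = 1%C -> e t <> 1%C -> sum_n_m (fun b => e (INR b * t)) 0 (Q - 1) = RtoC 0.
Proof.
  intros HQ Hper Hne. change (@eq C (sum_n_m (fun b => e (INR b * t)) 0 (Q - 1)) (RtoC 0)).
  set (Sg := sum_n_m (fun b => e (INR b * t)) 0 (Q - 1)).
  (* multiplying by [e t] shifts the index, and [e (Q t) = e 0] closes the cycle *)
  assert (Hz : (e t * Sg)%C = Sg).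
  { unfold Sg. rewrite <- Csum_mult_l.
    rewrite (sum_n_m_ext _ (fun b => e (INR (S b) * t)))
      by (intros; rewrite <- e_add, S_INR; f_equal; ring).
    rewrite (sum_n_m_S (fun b => e (INR b * t))).
    destruct Q as [|Q]; [lia|]. replace (S Q - 1)%nat with Q by lia.
    rewrite sum_n_Sm, (sum_Sn_m _ 0 Q), Hper by lia.
    simpl INR. rewrite Rmult_0_l, e_0. apply plus_comm. }
  assert (Hne' : (e t - 1)%C <> 0%C).
  { intros H. apply Hne. transitivity ((e t - 1) + 1)%C; [ring|]. rewrite H. ring. }
  replace Sg with (/ (e t - 1) * ((e t * Sg) - Sg))%C by (field; exact Hne').
  rewrite Hz. ring.
Qed.

Lemma sum_e_orthogonality (Q : nat) (j : Z) : (1 <= Q)%nat ->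
  sum_n_m (fun b => e (INR b * IZR j / INR Q)) 0 (Q - 1) = (INR Q * dvd_ind Q j)%C.
Proof.
  intros HQ. assert (HQ0 : INR Q <> 0) by (apply not_0_INR; lia).
  unfold dvd_ind. destruct (Z.eqb_spec (j mod Z.of_nat Q) 0) as [Hm|Hm].
  - apply Z.mod_divide in Hm; [|lia]. destruct Hm as [k ->].
    rewrite (sum_n_m_ext _ (fun _ => RtoC 1)).
    + rewrite Csum_const by lia. rewrite Cmult_1_r. f_equal.
      replace (S (Q - 1) - 0)%nat with Q by lia. ring.
    + intros b. rewrite <- e_IZR with (k := (Z.of_nat b * k)%Z). f_equal.
      rewrite !mult_IZR, <- !INR_IZR_INZ. field. auto.
  - rewrite (sum_n_m_ext _ (fun b => e (INR b * (IZR j / INR Q)))) by (intros; f_equal; unfold Rdiv; ring).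
    rewrite sum_e_full_period.
    + rewrite Cmult_0_r. reflexivity.
    + exact HQ.
    + replace (INR Q * (IZR j / INR Q)) with (IZR j) by (field; auto). apply e_IZR.
    + intros H. destruct (e_eq_1 _ H) as [k Hk].
      apply Hm, Z.mod_divide; [lia|]. exists k.
      apply eq_IZR. rewrite mult_IZR, <- INR_IZR_INZ, <- Hk. field. auto.
Qed.

Lemma sum_period_dvd_ind (G : nat -> C) (Q m : nat) :
  (1 <= Q)%nat -> (forall x, G (x + Q)%nat = G x) ->
  sum_n_m (fun x => (G x * dvd_ind Q (Z.of_nat x - Z.of_nat m))%C) 1 Q = G m.
Proof.
  intros HQ Hp.
  rewrite (sum_n_m_periodic_shift (fun x => (G x * dvd_ind Q (Z.of_nat x - Z.of_nat m))%C) Q HQ)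
    with (k := m).
  2:{ intros x. rewrite Hp. f_equal. unfold dvd_ind.
      replace (Z.of_nat (x + Q) - Z.of_nat m)%Z with ((Z.of_nat x - Z.of_nat m) + 1 * Z.of_nat Q)%Z by lia.
      rewrite Z.mod_add by lia. reflexivity. }
  destruct Q as [|Q]; [lia|]. rewrite sum_n_Sm by lia.
  rewrite sum_n_m_zero_loc.
  2:{ intros x Hx. unfold dvd_ind. replace (Z.of_nat (x + m) - Z.of_nat m)%Z with (Z.of_nat x) by lia.
      rewrite Z.mod_small by lia. destruct (Z.eqb_spec (Z.of_nat x) 0); [lia|]. apply Cmult_0_r. }
  rewrite plus_zero_l. unfold dvd_ind.
  replace (Z.of_nat (S Q + m) - Z.of_nat m)%Z with (1 * Z.of_nat (S Q))%Z by lia.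
  rewrite Z.mod_mul by lia. simpl Z.eqb.
  replace (S Q + m)%nat with (m + S Q)%nat by lia. rewrite Hp. apply Cmult_1_r.
Qed.

Definition twisted_sum (Q N : nat) (beta : R) (b : Z) : C :=
  sum_n_m (fun m : nat => e (beta * INR m ^ 2 - IZR b * INR m / INR Q)) 1 N.

Lemma S3_of_nat (Q : nat) (a b : Z) :
  S3 (Z.of_nat Q) a b = sum_n_m (fun x : nat => e ((IZR a * INR x ^ 2 + IZR b * INR x) / INR Q)) 1 Q.
Proof. unfold S3. rewrite Nat2Z.id, <- INR_IZR_INZ. reflexivity. Qed.

(* Expand [S(q,a,b)] and [T_b], swap the sums, and let the sum over [b] select [x = m mod Q]. *)
Lemma sum_quadratic_split (Q N : nat) (a : Z) (beta : R) : (1 <= Q)%nat ->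
  sum_n_m (fun m => e (INR m ^ 2 * (IZR a / INR Q + beta))) 1 N =
  sum_n_m (fun b => (S3 (Z.of_nat Q) a (Z.of_nat b) * (/ INR Q * twisted_sum Q N beta (Z.of_nat b)))%C) 0 (Q - 1).
Proof.
  intros HQ. assert (HQ0 : INR Q <> 0) by (apply not_0_INR; lia).
  set (A := fun x m : nat => IZR a * INR x ^ 2 / INR Q + beta * INR m ^ 2).
  symmetry.
  rewrite (sum_n_m_ext_loc _ (fun b => (/ INR Q * sum_n_m (fun x => sum_n_m (fun m =>
     (e (A x m) * e (INR b * IZR (Z.of_nat x - Z.of_nat m) / INR Q))%C) 1 N) 1 Q)%C)).
  2:{ intros b _. rewrite S3_of_nat, Cmult_assoc, (Cmult_comm (sum_n_m _ _ _)), <- Cmult_assoc. f_equal.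
      unfold twisted_sum. rewrite <- Csum_mult_r. apply sum_n_m_ext. intros x.
      rewrite <- Csum_mult_l. apply sum_n_m_ext. intros m. rewrite <- !e_add. f_equal.
      unfold A. rewrite minus_IZR, <- !INR_IZR_INZ. field. auto. }
  rewrite Csum_mult_l, sum_n_m_swap.
  rewrite (sum_n_m_ext _ (fun x => sum_n_m (fun m => (e (A x m) *
      sum_n_m (fun b => e (INR b * IZR (Z.of_nat x - Z.of_nat m) / INR Q)) 0 (Q - 1))%C) 1 N)).
  2:{ intros x. rewrite sum_n_m_swap. apply sum_n_m_ext. intros m. apply Csum_mult_l. }
  rewrite sum_n_m_swap, <- Csum_mult_l. apply sum_n_m_ext. intros m.
  rewrite <- Csum_mult_l.
  rewrite (sum_n_m_ext _ (fun x => (e (A x m) * dvd_ind Q (Z.of_nat x - Z.of_nat m))%C)).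
  2:{ intros x. rewrite sum_e_orthogonality by auto.
      assert (HQC : RtoC (INR Q) <> 0%C) by (intros H; apply HQ0; now injection H).
      as_C_eq. field. exact HQC. }
  rewrite (sum_period_dvd_ind (fun x => e (A x m)) Q m HQ).
  - unfold A. as_C_eq. f_equal. field. auto.
  - intros x. unfold A at 1. rewrite plus_INR.
    rewrite <- (e_plus_IZR (A x m) (a * (2 * Z.of_nat x + Z.of_nat Q))).
    unfold A. as_C_eq. f_equal.
    rewrite mult_IZR, plus_IZR, mult_IZR, <- !INR_IZR_INZ. field. auto.
Qed.

(** * Abel summation and the Kusmin-Landau bound *)

Lemma summation_by_parts (z c : nat -> C) (N : nat) : (1 <= N)%nat ->
  sum_n_m (fun m => (c m * (z (S m) - z m))%C) 1 N =
  (c N * z (S N) - c 1%nat * z 1%nat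
   - sum_n_m (fun m => (z m * (c m - c (m - 1)%nat))%C) 2 N)%C.
Proof.
  intros HN. induction N as [|N IH]; [lia|].
  destruct N as [|N].
  - rewrite sum_n_n, sum_n_m_zero by lia. as_C_eq.
    change (@zero C_AbelianMonoid) with (RtoC 0). ring.
  - rewrite (sum_n_Sm _ 1 (S N)), IH, (sum_n_Sm _ 2 (S N)) by lia. replace (S (S N) - 1)%nat with (S N) by lia.
    as_C_eq. change (@plus C_AbelianMonoid) with Cplus. ring.
Qed.

Lemma sum_abs_diff_nondecr (s : nat -> R) (N : nat) : (1 <= N)%nat ->
  (forall m, (1 <= m < N)%nat -> s m <= s (S m)) ->
  sum_n_m (fun m => Rabs (s m - s (m - 1)%nat)) 2 N = s N - s 1%nat.
Proof.
  intros HN Hs. induction N as [|N IH]; [lia|]. destruct N as [|N].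
  - rewrite sum_n_m_zero by lia. unfold zero; simpl. ring.
  - rewrite sum_n_Sm, IH by (try lia; intros; apply Hs; lia).
    replace (S (S N) - 1)%nat with (S N) by lia. unfold plus; simpl.
    rewrite Rabs_right; [ring|]. pose proof (Hs (S N) ltac:(lia)). lra.
Qed.

Lemma sum_abs_diff_monotone_le (s : nat -> R) (N : nat) (B : R) : (1 <= N)%nat ->
  ((forall m, (1 <= m < N)%nat -> s m <= s (S m)) \/
   (forall m, (1 <= m < N)%nat -> s (S m) <= s m)) ->
  (forall m, (1 <= m <= N)%nat -> Rabs (s m) <= B) ->
  sum_n_m (fun m => Rabs (s m - s (m - 1)%nat)) 2 N <= 2 * B.
Proof.
  intros HN Hmono HB.
  pose proof (HB N ltac:(lia)) as HBN. pose proof (HB 1%nat ltac:(lia)) as HB1.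
  apply Rabs_le_between in HBN. apply Rabs_le_between in HB1.
  destruct Hmono as [Hs|Hs].
  - rewrite sum_abs_diff_nondecr by auto. lra.
  - rewrite (sum_n_m_ext (fun m => Rabs (s m - s (m - 1)%nat))
              (fun m => Rabs ((fun k => - s k) m - (fun k => - s k) (m - 1)%nat))).
    + rewrite sum_abs_diff_nondecr by (auto; intros m Hm; pose proof (Hs m Hm); lra). lra.
    + intros. rewrite <- Rabs_Ropp. f_equal. ring.
Qed.

Lemma Cmod_sum_by_parts_le (z : nat -> C) (s : nat -> R) (alpha A B : R) (N : nat) :
  (1 <= N)%nat ->
  (forall m, (1 <= m <= S N)%nat -> Cmod (z m) <= 1) ->
  ((forall m, (1 <= m < N)%nat -> s m <= s (S m)) \/
   (forall m, (1 <= m < N)%nat -> s (S m) <= s m)) ->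
  Rabs alpha <= A ->
  (forall m, (1 <= m <= N)%nat -> Rabs (s m) <= B) ->
  Cmod (sum_n_m (fun m => ((alpha, s m) * (z (S m) - z m))%C) 1 N) <= 2 * A + 4 * B.
Proof.
  intros HN Hz Hmono HA HB.
  rewrite (summation_by_parts z (fun m => (alpha, s m))) by auto.
  assert (Hc : forall m, (1 <= m <= N)%nat -> Cmod (alpha, s m) <= A + B).
  { intros m Hm. eapply Rle_trans; [apply Cmod_le_Rabs_add|]. pose proof (HB m Hm). lra. }
  assert (Hsum : Cmod (sum_n_m (fun m => (z m * ((alpha, s m) - (alpha, s (m - 1)%nat)))%C) 2 N) <= 2 * B).
  { eapply Rle_trans; [apply Cmod_sum_n_m|].
    eapply Rle_trans; [|apply (sum_abs_diff_monotone_le s N B); auto].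
    apply sum_n_m_le_loc. intros m Hm. rewrite Cmod_mult.
    replace ((alpha, s m) - (alpha, s (m - 1)%nat))%C with (RtoC 0 + Ci * RtoC (s m - s (m - 1)%nat))%C.
    2:{ unfold Cminus, Cplus, Copp, Cmult, Ci, RtoC; simpl. apply pair_eq; ring. }
    rewrite Cplus_0_l, Cmod_mult, Cmod_Ci, Cmod_R, Rmult_1_l.
    pose proof (Hz m ltac:(lia)). pose proof (Rabs_pos (s m - s (m - 1)%nat)).
    pose proof (Cmod_ge_0 (z m)). nra. }
  unfold Cminus. eapply Rle_trans; [apply Cmod_triangle|]. rewrite Cmod_opp.
  eapply Rle_trans; [apply Rplus_le_compat_r, Cmod_triangle|]. rewrite Cmod_opp, !Cmod_mult.
  pose proof (Hc N ltac:(lia)). pose proof (Hc 1%nat ltac:(lia)).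
  pose proof (Hz (S N) ltac:(lia)). pose proof (Hz 1%nat ltac:(lia)).
  pose proof (Cmod_ge_0 (alpha, s N)). pose proof (Cmod_ge_0 (alpha, s 1%nat)).
  pose proof (Cmod_ge_0 (z (S N))). pose proof (Cmod_ge_0 (z 1%nat)).
  unfold Cminus in Hsum. nra.
Qed.

Definition cot (u : R) := cos u / sin u.

Definition kl_coeff (D : R) : C := (- / 2, - cot (PI * D) / 2).

(* The identity behind the Kusmin-Landau bound: [(e D - 1)^-1 = -1/2 - (i/2) cot (pi D)]. *)
Lemma e_as_difference (phi D : R) : sin (PI * D) <> 0 ->
  e phi = (kl_coeff D * (e (phi + D) - e phi))%C.
Proof.
  intros Hs. rewrite e_add.
  assert (Hk : (kl_coeff D * (e D - 1))%C = 1%C).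
  { unfold kl_coeff, e, cot, Cminus, Cmult, Cplus, Copp, RtoC; simpl.
    replace (2 * PI * D) with (2 * (PI * D)) by ring.
    rewrite cos_2a_sin, sin_2a. pose proof (sin2_cos2 (PI * D)) as H. unfold Rsqr in H.
    apply pair_eq; field_simplify; auto; nra. }
  transitivity (e phi * (kl_coeff D * (e D - 1)))%C.
  - rewrite Hk. symmetry. apply Cmult_1_r.
  - ring.
Qed.

Lemma PI_gt_3 : 3 < PI.
Proof. pose proof PI2_3_2. lra. Qed.

Lemma sin_ge_cubic u : 0 <= u -> u <= PI -> u - u ^ 3 / 6 <= sin u.
Proof.
  intros H0 H1. destruct (sin_bound u 0 H0 H1) as [Hsb _].
  unfold sin_approx, sum_f_R0, sin_term in Hsb. simpl in Hsb. lra.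
Qed.

Lemma cos_taylor_bounds u : - PI / 2 <= u -> u <= PI / 2 ->
  1 - u ^ 2 / 2 <= cos u <= 1 - u ^ 2 / 2 + u ^ 4 / 24.
Proof.
  intros H0 H1. destruct (cos_bound u 0 H0 H1) as [Hc1 Hc2].
  unfold cos_approx, sum_f_R0, cos_term in Hc1, Hc2. simpl in Hc1, Hc2. split; lra.
Qed.

Lemma sin_ge_margin u d : 0 < d <= / 2 -> PI * d <= u -> u <= PI * (1 - d) -> d <= sin u.
Proof.
  intros Hd H1 H2. pose proof PI_gt_3. pose proof PI_4.
  assert (Hthird : forall v, 0 <= v -> v <= 2 -> v / 3 <= sin v).
  { intros v Hv0 Hv2. pose proof (sin_ge_cubic v Hv0 ltac:(lra)). nra. }
  destruct (Rle_lt_dec u (PI / 2)).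
  - pose proof (Hthird u ltac:(nra) ltac:(lra)). nra.
  - rewrite <- sin_PI_x. pose proof (Hthird (PI - u) ltac:(nra) ltac:(lra)). nra.
Qed.

Lemma Rabs_cot_le_margin u d : 0 < d <= / 2 -> PI * d <= u -> u <= PI * (1 - d) ->
  Rabs (cot u) <= / d.
Proof.
  intros Hd H1 H2. pose proof (sin_ge_margin u d Hd H1 H2).
  unfold cot, Rdiv. rewrite Rabs_mult, Rabs_inv, (Rabs_right (sin u)) by lra.
  pose proof (COS_bound u). assert (Rabs (cos u) <= 1) by (apply Rabs_le; lra).
  apply Rle_trans with (1 * / sin u).
  - apply Rmult_le_compat_r; [|lra]. left; apply Rinv_0_lt_compat; lra.
  - rewrite Rmult_1_l. apply Rinv_le_contravar; lra.
Qed.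

Lemma cot_decreasing u v : 0 < u -> u <= v -> v < PI -> cot v <= cot u.
Proof.
  intros Hu Huv Hv. unfold cot.
  assert (0 < sin u) by (apply sin_gt_0; lra). assert (0 < sin v) by (apply sin_gt_0; lra).
  assert (Hd : 0 <= sin (v - u)) by (apply sin_ge_0; lra). rewrite sin_minus in Hd.
  apply Rmult_le_reg_r with (sin u * sin v); [nra|].
  unfold Rdiv.
  replace (cos v * / sin v * (sin u * sin v)) with (cos v * sin u) by (field; lra).
  replace (cos u * / sin u * (sin u * sin v)) with (cos u * sin v) by (field; lra). lra.
Qed.

Definition cot_sub_inv (u : R) := cot u - / u.

Lemma Rabs_cot_sub_inv_le_1 u : 0 < u -> u <= PI / 2 -> Rabs (cot_sub_inv u) <= 1.
Proof.
  intros H0 H1. pose proof PI_gt_3. pose proof PI_4.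
  assert (0 < sin u) by (apply sin_gt_0; lra).
  pose proof (sin_lt_x u H0).
  pose proof (sin_ge_cubic u ltac:(lra) ltac:(lra)).
  destruct (cos_taylor_bounds u ltac:(lra) ltac:(lra)) as [Hc1 Hc2].
  assert (0 <= cos u) by (apply cos_ge_0; lra).
  unfold cot_sub_inv, cot. apply Rabs_le. split.
  - assert (cos u / sin u >= cos u / u).
    { unfold Rdiv. apply Rle_ge, Rmult_le_compat_l; auto. apply Rinv_le_contravar; lra. }
    assert (cos u / u - / u >= - 1).
    { unfold Rdiv. apply Rle_ge, Rmult_le_reg_r with u; auto.
      replace ((cos u * / u - / u) * u) with (cos u - 1) by (field; lra). nra. }
    lra.
  - assert (u * cos u <= sin u) by nra.
    assert (cos u / sin u <= / u).
    { apply Rmult_le_reg_r with (u * sin u); [nra|]. unfold Rdiv.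
      replace (cos u * / sin u * (u * sin u)) with (u * cos u) by (field; lra).
      replace (/ u * (u * sin u)) with (sin u) by (field; lra). lra. }
    lra.
Qed.

Lemma cot_sub_inv_decreasing u v : 0 < u -> u <= v -> v < PI -> cot_sub_inv v <= cot_sub_inv u.
Proof.
  intros Hu Huv Hv. destruct (Req_dec u v) as [->|Hne]; [lra|].
  assert (- cot_sub_inv u < - cot_sub_inv v); [|lra].
  apply (incr_function (fun x => - cot_sub_inv x) 0 PI (fun x => / (sin x) ^ 2 - / x ^ 2)).
  - intros x Hx1 Hx2. simpl in Hx1, Hx2. unfold cot_sub_inv, cot.
    assert (0 < sin x) by (apply sin_gt_0; lra).
    auto_derive.
    + repeat split; try lra. auto.
    + assert (Hc : cos x ^ 2 = 1 - sin x ^ 2) by (pose proof (sin2_cos2 x); unfold Rsqr in *; nra).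
      transitivity (1 + cos x ^ 2 / sin x ^ 2 - / x ^ 2); [field; lra|].
      rewrite Hc. field. lra.
  - intros x Hx1 Hx2. simpl in Hx1, Hx2.
    assert (0 < sin x) by (apply sin_gt_0; lra).
    pose proof (sin_lt_x x Hx1).
    assert (sin x ^ 2 < x ^ 2) by nra.
    apply Rlt_gt, Rlt_0_minus, Rinv_lt_contravar; [apply Rmult_lt_0_compat; apply pow_lt; lra | auto].
  - simpl; lra.
  - lra.
  - simpl; lra.
Qed.

Lemma cot_sub_inv_opp u : cot_sub_inv (- u) = - cot_sub_inv u.
Proof. unfold cot_sub_inv, cot. rewrite sin_neg, cos_neg. unfold Rdiv. rewrite !Rinv_opp. ring. Qed.

Lemma shifted_phase_margin (b r x : R) : 1 <= b -> 1 <= r -> Rabs x <= / (2 * (b + r)) ->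
  b * r / (2 * (b + r) ^ 2) <= x + r / (b + r) <= 1 - b * r / (2 * (b + r) ^ 2).
Proof.
  intros Hb Hr Hx. apply Rabs_le_between in Hx.
  assert (Hfrac : forall y, 1 <= y -> y <= b + r -> 0 < y / (2 * (b + r)) /\ y / (b + r) <= 1).
  { intros y Hy1 Hy2. split; [apply Rdiv_lt_0_compat; lra|].
    apply Rmult_le_reg_r with (b + r); [lra|]. unfold Rdiv.
    rewrite Rmult_assoc, Rinv_l by lra. lra. }
  destruct (Hfrac b) as [Hb2 Hbq]; [lra|lra|]. destruct (Hfrac r) as [Hr2 Hrq]; [lra|lra|].
  replace (b * r / (2 * (b + r) ^ 2)) with (b / (b + r) * (r / (2 * (b + r)))) by (field; lra).
  assert (b / (b + r) * (r / (2 * (b + r))) <= r / (2 * (b + r))) by nra.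
  assert (b / (b + r) * (r / (2 * (b + r))) <= b / (2 * (b + r))).
  { replace (b / (b + r) * (r / (2 * (b + r)))) with (r / (b + r) * (b / (2 * (b + r)))) by (field; lra).
    nra. }
  assert (r / (b + r) - / (2 * (b + r)) = r / (2 * (b + r)) + (r - 1) / (2 * (b + r))) by (field; lra).
  assert (r / (b + r) + / (2 * (b + r)) = 1 - b / (2 * (b + r)) - (b - 1) / (2 * (b + r))) by (field; lra).
  assert (0 <= (r - 1) / (2 * (b + r))) by (apply Rdiv_le_0_compat; lra).
  assert (0 <= (b - 1) / (2 * (b + r))) by (apply Rdiv_le_0_compat; lra).
  lra.
Qed.

Lemma phase_margin_bounds (b r : R) : 1 <= b -> 1 <= r ->
  0 < b * r / (2 * (b + r) ^ 2) <= / 2.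
Proof.
  intros Hb Hr. split; [apply Rdiv_lt_0_compat; nra|].
  apply Rmult_le_reg_r with (2 * (b + r) ^ 2); [nra|].
  unfold Rdiv. rewrite Rmult_assoc, Rinv_l by nra. nra.
Qed.

Lemma Rabs_phase_step_le (N m : nat) (beta c : R) : (1 <= m <= N)%nat ->
  (2 * INR N + 1) * Rabs beta <= c -> Rabs ((2 * INR m + 1) * beta) <= c.
Proof.
  intros Hm Hc. assert (INR m <= INR N) by (apply le_INR; lia). pose proof (pos_INR m).
  rewrite Rabs_mult, (Rabs_right (2 * INR m + 1)) by lra.
  eapply Rle_trans; [|exact Hc]. apply Rmult_le_compat_r; [apply Rabs_pos | lra].
Qed.

(* Kusmin-Landau: the phase increments of [m |-> beta m^2 - b m / Q] stay away from the integers. *)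
Lemma Cmod_twisted_sum_le (Q N b : nat) (beta : R) :
  (1 <= N)%nat -> (1 <= b < Q)%nat ->
  (2 * INR N + 1) * Rabs beta <= / (2 * INR Q) ->
  Cmod (twisted_sum Q N beta (Z.of_nat b)) <= 1 + 4 * INR Q * (/ INR b + / INR (Q - b)).
Proof.
  intros HN Hb Hbeta.
  set (r := (Q - b)%nat).
  assert (HQr : INR Q = INR b + INR r) by (unfold r; rewrite <- plus_INR; f_equal; lia).
  assert (Hb1 : 1 <= INR b) by (apply (le_INR 1); lia).
  assert (Hr1 : 1 <= INR r) by (apply (le_INR 1); lia).
  pose proof PI_gt_3.
  set (phi := fun m : nat => beta * INR m ^ 2 + INR r * INR m / INR Q).
  set (D := fun m : nat => (2 * INR m + 1) * beta + INR r / INR Q).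
  set (d := INR b * INR r / (2 * INR Q ^ 2)).
  assert (Hd : 0 < d <= / 2) by (unfold d; rewrite HQr; apply phase_margin_bounds; auto).
  assert (HD : forall m, (1 <= m <= N)%nat -> PI * d <= PI * D m <= PI * (1 - d)).
  { intros m Hm. pose proof (Rabs_phase_step_le N m beta _ Hm Hbeta) as Hx.
    rewrite HQr in Hx. destruct (shifted_phase_margin _ _ _ Hb1 Hr1 Hx).
    unfold D, d. rewrite HQr. split; apply Rmult_le_compat_l; lra. }
  unfold twisted_sum.
  rewrite (sum_n_m_ext_loc _ (fun m => (kl_coeff (D m) * (e (phi (S m)) - e (phi m)))%C)).
  2:{ intros m Hm.
      replace (beta * INR m ^ 2 - IZR (Z.of_nat b) * INR m / INR Q) with (phi m + IZR (- Z.of_nat m)).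
      2:{ unfold phi. rewrite opp_IZR, <- !INR_IZR_INZ. unfold r. rewrite minus_INR by lia. field. lra. }
      rewrite e_plus_IZR. replace (phi (S m)) with (phi m + D m) by (unfold phi, D; rewrite S_INR; field; lra).
      apply e_as_difference. destruct (HD m Hm). pose proof (sin_ge_margin _ d Hd H0 H1). lra. }
  replace (1 + 4 * INR Q * (/ INR b + / INR r)) with (2 * / 2 + 4 * (/ d / 2))
    by (unfold d; rewrite HQr; field; lra).
  unfold kl_coeff. apply (Cmod_sum_by_parts_le (fun m => e (phi m)) (fun m => - cot (PI * D m) / 2)); auto.
  - intros. rewrite Cmod_e. lra.
  - destruct (Rle_lt_dec 0 beta); [left|right]; intros m Hm;
      destruct (HD m ltac:(lia)), (HD (S m) ltac:(lia)).
    + assert (D m <= D (S m)) by (unfold D; rewrite S_INR; nra).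
      pose proof (cot_decreasing (PI * D m) (PI * D (S m)) ltac:(nra) ltac:(nra) ltac:(nra)). lra.
    + assert (D (S m) <= D m) by (unfold D; rewrite S_INR; nra).
      pose proof (cot_decreasing (PI * D (S m)) (PI * D m) ltac:(nra) ltac:(nra) ltac:(nra)). lra.
  - rewrite Rabs_Ropp, Rabs_right by lra. lra.
  - intros m Hm. destruct (HD m Hm). pose proof (Rabs_cot_le_margin _ d Hd H0 H1).
    unfold Rdiv. rewrite Rabs_mult, Rabs_Ropp, (Rabs_right (/ 2)) by lra. lra.
Qed.

(** * Comparison of [T_0] with the integral *)

Definition quad_integral (beta X : R) : C :=
  RInt (V := C_R_CompleteNormedModule) (fun x => e (x ^ 2 * beta)) 0 X.

Definition cos_quad (beta x : R) := cos (2 * PI * (x ^ 2 * beta)).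
Definition sin_quad (beta x : R) := sin (2 * PI * (x ^ 2 * beta)).

Lemma ex_RInt_cos_quad beta a b : ex_RInt (cos_quad beta) a b.
Proof.
  apply (@ex_RInt_continuous R_CompleteNormedModule). intros x _.
  apply (@ex_derive_continuous R_AbsRing R_NormedModule). unfold cos_quad. auto_derive. auto.
Qed.

Lemma ex_RInt_sin_quad beta a b : ex_RInt (sin_quad beta) a b.
Proof.
  apply (@ex_RInt_continuous R_CompleteNormedModule). intros x _.
  apply (@ex_derive_continuous R_AbsRing R_NormedModule). unfold sin_quad. auto_derive. auto.
Qed.

Lemma RInt_e_quad beta a b :
  RInt (V := C_R_CompleteNormedModule) (fun x => e (x ^ 2 * beta)) a b =
  (RInt (cos_quad beta) a b, RInt (sin_quad beta) a b).
Proof.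
  apply is_RInt_unique.
  apply (is_RInt_fct_extend_pair (U := R_NormedModule) (V := R_NormedModule) (fun x => e (x ^ 2 * beta))).
  - apply (RInt_correct (cos_quad beta)), ex_RInt_cos_quad.
  - apply (RInt_correct (sin_quad beta)), ex_RInt_sin_quad.
Qed.

Lemma sum_RInt_unit_intervals (f : R -> R) (Hf : forall a b, ex_RInt f a b) N :
  sum_n_m (fun m => RInt f (INR m) (INR m + 1)) 1 N = RInt f 1 (INR N + 1).
Proof.
  induction N as [|N IH].
  - rewrite sum_n_m_zero by lia. simpl. rewrite Rplus_0_l, RInt_point. reflexivity.
  - rewrite sum_n_Sm, IH, S_INR by lia.
    apply (RInt_Chasles f 1 (INR N + 1) (INR N + 1 + 1)); auto.
Qed.

Lemma RInt_cos_linear a c D : D <> 0 ->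
  RInt (fun x => cos (2 * PI * (c + D * (x - a)))) a (a + 1) =
  (sin (2 * PI * (c + D)) - sin (2 * PI * c)) / (2 * PI * D).
Proof.
  intros HD. pose proof PI_gt_3.
  assert (Hi := @is_RInt_derive R_CompleteNormedModule
    (fun x => sin (2 * PI * (c + D * (x - a))) / (2 * PI * D))
    (fun x => cos (2 * PI * (c + D * (x - a)))) a (a + 1)).
  rewrite (is_RInt_unique _ _ _ _ (Hi
    ltac:(intros x _; auto_derive; [auto | unfold Rminus; as_R_eq; field; lra])
    ltac:(intros x _; apply (@ex_derive_continuous R_AbsRing R_NormedModule); auto_derive; auto))).
  unfold minus, plus, opp; simpl. replace (a + 1 - a) with 1 by ring. replace (a - a) with 0 by ring.
  rewrite Rmult_1_r, Rmult_0_r, Rplus_0_r. field. lra.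
Qed.

Lemma RInt_sin_linear a c D : D <> 0 ->
  RInt (fun x => sin (2 * PI * (c + D * (x - a)))) a (a + 1) =
  (cos (2 * PI * c) - cos (2 * PI * (c + D))) / (2 * PI * D).
Proof.
  intros HD. pose proof PI_gt_3.
  assert (Hi := @is_RInt_derive R_CompleteNormedModule
    (fun x => - cos (2 * PI * (c + D * (x - a))) / (2 * PI * D))
    (fun x => sin (2 * PI * (c + D * (x - a)))) a (a + 1)).
  rewrite (is_RInt_unique _ _ _ _ (Hi
    ltac:(intros x _; auto_derive; [auto | unfold Rminus; as_R_eq; field; lra])
    ltac:(intros x _; apply (@ex_derive_continuous R_AbsRing R_NormedModule); auto_derive; auto))).
  unfold minus, plus, opp; simpl. replace (a + 1 - a) with 1 by ring. replace (a - a) with 0 by ring.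
  rewrite Rmult_1_r, Rmult_0_r, Rplus_0_r. field. lra.
Qed.

Lemma quad_phase_linearization a beta x : a <= x <= a + 1 ->
  Rabs (2 * PI * (x ^ 2 * beta) - 2 * PI * (a ^ 2 * beta + (2 * a + 1) * beta * (x - a)))
  <= 2 * PI * Rabs beta.
Proof.
  intros Hx. pose proof PI_gt_3.
  replace (2 * PI * (x ^ 2 * beta) - 2 * PI * (a ^ 2 * beta + (2 * a + 1) * beta * (x - a)))
    with ((2 * PI * beta) * ((x - a) * (x - a - 1))) by ring.
  rewrite Rabs_mult, (Rabs_mult (2 * PI) beta), (Rabs_right (2 * PI)) by lra.
  assert (Rabs ((x - a) * (x - a - 1)) <= 1) by (apply Rabs_le; split; nra).
  pose proof (Rabs_pos beta).
  rewrite <- (Rmult_1_r (2 * PI * Rabs beta)) at 2. apply Rmult_le_compat_l; [nra | auto].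
Qed.

Lemma RInt_quad_phase_linearization (g : R -> R) a beta :
  (forall x y, Rabs (g x - g y) <= Rabs (x - y)) ->
  Rabs (RInt (fun x => g (2 * PI * (x ^ 2 * beta))) a (a + 1)
        - RInt (fun x => g (2 * PI * (a ^ 2 * beta + (2 * a + 1) * beta * (x - a)))) a (a + 1))
  <= 2 * PI * Rabs beta.
Proof.
  intros Hg.
  assert (Hcont : forall x, continuous g x).
  { intros x. apply (proj2 (filterlim_locally _ _)). intros eps. exists eps. intros y Hy.
    apply Rle_lt_trans with (Rabs (y - x)); [apply Hg | exact Hy]. }
  assert (Hex : forall (h : R -> R), (forall x, continuous h x) ->
            ex_RInt (fun x => g (h x)) a (a + 1)).
  { intros h Hh. apply (@ex_RInt_continuous R_CompleteNormedModule). intros x _.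
    apply continuous_comp; auto. }
  assert (Hq : forall x, continuous (fun x => 2 * PI * (x ^ 2 * beta)) x).
  { intros x. apply (@ex_derive_continuous R_AbsRing R_NormedModule). auto_derive. auto. }
  assert (Hl : forall x, continuous (fun x => 2 * PI * (a ^ 2 * beta + (2 * a + 1) * beta * (x - a))) x).
  { intros x. apply (@ex_derive_continuous R_AbsRing R_NormedModule). auto_derive. auto. }
  change (Rabs (minus (RInt (fun x => g (2 * PI * (x ^ 2 * beta))) a (a + 1))
    (RInt (fun x => g (2 * PI * (a ^ 2 * beta + (2 * a + 1) * beta * (x - a)))) a (a + 1))) <= 2 * PI * Rabs beta).
  rewrite <- RInt_minus by auto.
  replace (2 * PI * Rabs beta) with ((a + 1 - a) * (2 * PI * Rabs beta)) by ring.
  apply abs_RInt_le_const; [lra | apply ex_RInt_minus; auto |].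
  intros t Ht. unfold minus, plus, opp; simpl.
  eapply Rle_trans; [apply Hg | apply quad_phase_linearization; lra].
Qed.

Lemma RInt_cos_quad_unit_approx a beta : 0 <= a -> beta <> 0 ->
  Rabs ((sin (2 * PI * (a ^ 2 * beta + (2 * a + 1) * beta)) - sin (2 * PI * (a ^ 2 * beta)))
          / (2 * PI * ((2 * a + 1) * beta))
        - RInt (cos_quad beta) a (a + 1))
  <= 2 * PI * Rabs beta.
Proof.
  intros Ha Hb. rewrite Rabs_minus_sym.
  rewrite <- (RInt_cos_linear a (a ^ 2 * beta) ((2 * a + 1) * beta))
    by (apply Rmult_integral_contrapositive; split; lra).
  apply (RInt_quad_phase_linearization cos), cos_lipschitz.
Qed.

Lemma RInt_sin_quad_unit_approx a beta : 0 <= a -> beta <> 0 ->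
  Rabs ((cos (2 * PI * (a ^ 2 * beta)) - cos (2 * PI * (a ^ 2 * beta + (2 * a + 1) * beta)))
          / (2 * PI * ((2 * a + 1) * beta))
        - RInt (sin_quad beta) a (a + 1))
  <= 2 * PI * Rabs beta.
Proof.
  intros Ha Hb. rewrite Rabs_minus_sym.
  rewrite <- (RInt_sin_linear a (a ^ 2 * beta) ((2 * a + 1) * beta))
    by (apply Rmult_integral_contrapositive; split; lra).
  apply (RInt_quad_phase_linearization sin), sin_lipschitz.
Qed.

Lemma sum_sub_RInt_le (F : R -> R) (L : nat -> R) (N : nat) (X K : R) :
  (forall a b, ex_RInt F a b) -> (forall x, Rabs (F x) <= 1) ->
  INR N <= X <= INR N + 1 -> (1 <= N)%nat ->
  (forall m, (1 <= m <= N)%nat -> Rabs (L m - RInt F (INR m) (INR m + 1)) <= K) ->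
  Rabs (sum_n_m L 1 N - RInt F 0 X) <= INR N * K + 2.
Proof.
  intros Hex HF HX HN HK.
  assert (HN1 : 1 <= INR N) by (apply (le_INR 1); lia).
  assert (Hunit : forall a b, a <= b <= a + 1 -> Rabs (RInt F a b) <= 1).
  { intros a b Hab. apply Rle_trans with ((b - a) * 1); [apply abs_RInt_le_const; auto; lra | lra]. }
  assert (Hsplit : RInt F 0 X = RInt F 0 1 + (RInt F 1 (INR N + 1) + RInt F (INR N + 1) X)).
  { change (RInt F 0 X = plus (RInt F 0 1) (plus (RInt F 1 (INR N + 1)) (RInt F (INR N + 1) X))).
    rewrite !RInt_Chasles by auto. reflexivity. }
  assert (B1 : Rabs (RInt F 0 1) <= 1) by (apply Hunit; lra).
  assert (B2 : Rabs (RInt F (INR N + 1) X) <= 1).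
  { rewrite <- opp_RInt_swap by auto. unfold opp; simpl. rewrite Rabs_Ropp. apply Hunit. lra. }
  assert (B3 : Rabs (sum_n_m L 1 N - sum_n_m (fun m => RInt F (INR m) (INR m + 1)) 1 N) <= INR N * K).
  { eapply Rle_trans; [apply Rabs_sum_n_m_minus|].
    eapply Rle_trans; [apply sum_n_m_le_loc; intros m Hm; apply (HK m Hm)|].
    rewrite sum_n_m_const. replace (S N - 1)%nat with N by lia. lra. }
  rewrite Hsplit, <- (sum_RInt_unit_intervals F Hex N).
  set (Sg := sum_n_m (fun m => RInt F (INR m) (INR m + 1)) 1 N) in *.
  replace (sum_n_m L 1 N - (RInt F 0 1 + (Sg + RInt F (INR N + 1) X)))
    with ((sum_n_m L 1 N - Sg) + - RInt F 0 1 + - RInt F (INR N + 1) X) by ring.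
  eapply Rle_trans; [apply Rabs_triang|].
  eapply Rle_trans; [apply Rplus_le_compat_r, Rabs_triang|].
  rewrite !Rabs_Ropp. lra.
Qed.

Lemma fst_sum_n_m (F : nat -> C) l N : fst (sum_n_m F l N) = sum_n_m (fun m => fst (F m)) l N.
Proof.
  induction N as [|N IH].
  - destruct l; [rewrite !sum_n_n; reflexivity | rewrite !sum_n_m_zero by lia; reflexivity].
  - destruct (le_lt_dec l (S N)).
    + rewrite !sum_n_Sm by lia. simpl. rewrite IH. reflexivity.
    + rewrite !sum_n_m_zero by lia. reflexivity.
Qed.

Lemma snd_sum_n_m (F : nat -> C) l N : snd (sum_n_m F l N) = sum_n_m (fun m => snd (F m)) l N.
Proof.
  induction N as [|N IH].
  - destruct l; [rewrite !sum_n_n; reflexivity | rewrite !sum_n_m_zero by lia; reflexivity].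
  - destruct (le_lt_dec l (S N)).
    + rewrite !sum_n_Sm by lia. simpl. rewrite IH. reflexivity.
    + rewrite !sum_n_m_zero by lia. reflexivity.
Qed.

Lemma quad_increment_range (N m : nat) (beta : R) : beta <> 0 ->
  (2 * INR N + 1) * Rabs beta <= / 2 -> (1 <= m <= N)%nat ->
  0 < Rabs (PI * ((2 * INR m + 1) * beta)) <= PI / 2.
Proof.
  intros Hb Hbeta Hm. pose proof PI_gt_3. pose proof (pos_INR m).
  pose proof (Rabs_phase_step_le N m beta _ Hm Hbeta).
  assert (0 < Rabs ((2 * INR m + 1) * beta))
    by (apply Rabs_pos_lt, Rmult_integral_contrapositive; split; lra).
  rewrite Rabs_mult, (Rabs_right PI) by lra. split; [apply Rmult_lt_0_compat |]; nra.
Qed.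

Definition kl_regular (D : R) : C := (- / 2, - cot_sub_inv (PI * D) / 2).
Definition kl_singular (D : R) : C := (0, - / (2 * PI * D)).

Lemma kl_coeff_split D : PI * D <> 0 -> kl_coeff D = (kl_regular D + kl_singular D)%C.
Proof.
  intros HD. assert (D <> 0) by (intros ->; apply HD; ring). pose proof PI_gt_3.
  unfold kl_coeff, kl_regular, kl_singular, cot_sub_inv, Cplus; simpl. apply pair_eq; [ring | field; lra].
Qed.

Lemma kl_singular_mul_e_diff phi D : D <> 0 ->
  (kl_singular D * (e (phi + D) - e phi))%C =
  ((sin (2 * PI * (phi + D)) - sin (2 * PI * phi)) / (2 * PI * D),
   (cos (2 * PI * phi) - cos (2 * PI * (phi + D))) / (2 * PI * D)).
Proof.
  intros HD. pose proof PI_gt_3.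
  unfold kl_singular, e, Cmult, Cminus, Cplus, Copp; simpl. apply pair_eq; field; lra.
Qed.

Lemma Cmod_sum_regular_part_le (N : nat) (beta : R) : (1 <= N)%nat -> beta <> 0 ->
  (2 * INR N + 1) * Rabs beta <= / 2 ->
  Cmod (sum_n_m (fun m => (kl_regular ((2 * INR m + 1) * beta)
          * (e (INR (S m) ^ 2 * beta) - e (INR m ^ 2 * beta)))%C) 1 N) <= 3.
Proof.
  intros HN Hb0 Hbeta. pose proof PI_gt_3.
  set (u := fun m : nat => PI * ((2 * INR m + 1) * beta)).
  assert (Hu : forall m, (1 <= m <= N)%nat -> 0 < Rabs (u m) <= PI / 2)
    by (intros; apply (quad_increment_range N); auto).
  replace 3 with (2 * / 2 + 4 * / 2) by field.
  unfold kl_regular. apply (Cmod_sum_by_parts_le (fun m => e (INR m ^ 2 * beta)) (fun m => - cot_sub_inv (u m) / 2)); auto.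
  - intros. rewrite Cmod_e. lra.
  - (* [u] is monotone with constant sign, and [cot_sub_inv] is odd and decreasing *)
    assert (Hstep : forall m, u (S m) = u m + 2 * (PI * beta)) by (intros; unfold u; rewrite S_INR; ring).
    destruct (Rle_lt_dec 0 beta) as [Hpos|Hneg]; [left|right]; intros m Hm;
      destruct (Hu m ltac:(lia)), (Hu (S m) ltac:(lia)); pose proof (Hstep m).
    + assert (Hu0 : forall k, 0 <= u k).
      { intros k. pose proof (pos_INR k). unfold u. apply Rmult_le_pos; [lra | apply Rmult_le_pos; lra]. }
      assert (0 <= PI * beta) by (apply Rmult_le_pos; lra).
      rewrite !Rabs_right in * by (apply Rle_ge, Hu0).
      pose proof (cot_sub_inv_decreasing (u m) (u (S m)) ltac:(lra) ltac:(lra) ltac:(lra)). lra.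
    + assert (Hu0 : forall k, u k <= 0).
      { intros k. pose proof (pos_INR k). unfold u.
        assert (0 <= PI * (2 * INR k + 1)) by nra. nra. }
      assert (PI * beta <= 0) by nra.
      rewrite !Rabs_left1 in * by apply Hu0.
      pose proof (cot_sub_inv_decreasing (- u m) (- u (S m)) ltac:(lra) ltac:(lra) ltac:(lra)).
      rewrite !cot_sub_inv_opp in *. lra.
  - rewrite Rabs_Ropp, Rabs_right by lra. lra.
  - intros m Hm. destruct (Hu m Hm).
    assert (Rabs (cot_sub_inv (u m)) <= 1).
    { destruct (Rle_lt_dec 0 (u m)).
      - rewrite Rabs_right in * by lra. apply Rabs_cot_sub_inv_le_1; lra.
      - rewrite Rabs_left in * by lra. replace (u m) with (- (- u m)) by ring.
        rewrite cot_sub_inv_opp, Rabs_Ropp. apply Rabs_cot_sub_inv_le_1; lra. }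
    unfold Rdiv. rewrite Rabs_mult, Rabs_Ropp, (Rabs_right (/ 2)) by lra. lra.
Qed.

Lemma Cmod_sum_singular_part_sub_RInt_le (N : nat) (beta X : R) : (1 <= N)%nat -> beta <> 0 ->
  INR N <= X <= INR N + 1 -> (2 * INR N + 1) * Rabs beta <= / 2 ->
  Cmod (sum_n_m (fun m => (kl_singular ((2 * INR m + 1) * beta)
          * (e (INR (S m) ^ 2 * beta) - e (INR m ^ 2 * beta)))%C) 1 N
        - quad_integral beta X)%C <= 8.
Proof.
  intros HN Hb0 HX Hbeta. pose proof PI_gt_3.
  set (L := fun m : nat => (kl_singular ((2 * INR m + 1) * beta)
                            * (e (INR (S m) ^ 2 * beta) - e (INR m ^ 2 * beta)))%C).
  assert (HD : forall m : nat, (2 * INR m + 1) * beta <> 0).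
  { intros m. pose proof (pos_INR m). apply Rmult_integral_contrapositive. split; lra. }
  assert (HL : forall m, L m =
    ((sin (2 * PI * (INR m ^ 2 * beta + (2 * INR m + 1) * beta)) - sin (2 * PI * (INR m ^ 2 * beta)))
       / (2 * PI * ((2 * INR m + 1) * beta)),
     (cos (2 * PI * (INR m ^ 2 * beta)) - cos (2 * PI * (INR m ^ 2 * beta + (2 * INR m + 1) * beta)))
       / (2 * PI * ((2 * INR m + 1) * beta)))).
  { intros m. unfold L. rewrite <- kl_singular_mul_e_diff by apply HD.
    do 3 f_equal. rewrite S_INR. ring. }
  assert (Hre : forall m, (1 <= m <= N)%nat ->
    Rabs (fst (L m) - RInt (cos_quad beta) (INR m) (INR m + 1)) <= 2 * PI * Rabs beta)
    by (intros; rewrite HL; apply RInt_cos_quad_unit_approx; [apply pos_INR | auto]).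
  assert (Him : forall m, (1 <= m <= N)%nat ->
    Rabs (snd (L m) - RInt (sin_quad beta) (INR m) (INR m + 1)) <= 2 * PI * Rabs beta)
    by (intros; rewrite HL; apply RInt_sin_quad_unit_approx; [apply pos_INR | auto]).
  assert (HNb : INR N * (2 * PI * Rabs beta) <= 2).
  { pose proof (Rabs_pos beta). pose proof PI_4.
    assert (INR N * Rabs beta <= / 4) by lra.
    assert (0 <= INR N * Rabs beta) by (apply Rmult_le_pos; [apply pos_INR | auto]). nra. }
  assert (Hcos1 : forall x, Rabs (cos_quad beta x) <= 1) by (intros; apply Rabs_le, COS_bound).
  assert (Hsin1 : forall x, Rabs (sin_quad beta x) <= 1) by (intros; apply Rabs_le, SIN_bound).
  pose proof (sum_sub_RInt_le _ (fun m => fst (L m)) N X _ (ex_RInt_cos_quad beta) Hcos1 HX HN Hre) as Bre.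
  pose proof (sum_sub_RInt_le _ (fun m => snd (L m)) N X _ (ex_RInt_sin_quad beta) Hsin1 HX HN Him) as Bim.
  rewrite <- fst_sum_n_m in Bre. rewrite <- snd_sum_n_m in Bim.
  unfold quad_integral. rewrite RInt_e_quad.
  destruct (sum_n_m L 1 N) as [sr si]. simpl in Bre, Bim.
  unfold Cminus, Cplus, Copp. simpl.
  eapply Rle_trans; [apply Cmod_le_Rabs_add|]. unfold Rminus in Bre, Bim. lra.
Qed.

Lemma sin_neq_0_small u : 0 < Rabs u <= PI / 2 -> sin u <> 0.
Proof.
  intros [H0 H1]. pose proof PI_gt_3.
  destruct (Rle_lt_dec 0 u).
  - rewrite Rabs_right in H0, H1 by lra. pose proof (sin_gt_0 u). lra.
  - rewrite Rabs_left in H0, H1 by lra. pose proof (sin_gt_0 (- u)). rewrite sin_neg in *. lra.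
Qed.

Lemma sum_e_quad_split (N : nat) (beta : R) : beta <> 0 ->
  (2 * INR N + 1) * Rabs beta <= / 2 ->
  sum_n_m (fun m => e (INR m ^ 2 * beta)) 1 N =
  (sum_n_m (fun m => kl_regular ((2 * INR m + 1) * beta)
                     * (e (INR (S m) ^ 2 * beta) - e (INR m ^ 2 * beta))) 1 N
   + sum_n_m (fun m => kl_singular ((2 * INR m + 1) * beta)
                     * (e (INR (S m) ^ 2 * beta) - e (INR m ^ 2 * beta))) 1 N)%C.
Proof.
  intros Hb0 Hbeta. rewrite <- Csum_plus. apply sum_n_m_ext_loc. intros m Hm.
  destruct (quad_increment_range N m beta Hb0 Hbeta Hm) as [HD0 HD1].
  assert (HPD : PI * ((2 * INR m + 1) * beta) <> 0) by (intros Hc; rewrite Hc, Rabs_R0 in HD0; lra).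
  rewrite <- Cmult_plus_distr_r, <- kl_coeff_split by exact HPD.
  replace (INR (S m) ^ 2 * beta) with (INR m ^ 2 * beta + (2 * INR m + 1) * beta) by (rewrite S_INR; ring).
  apply e_as_difference, sin_neq_0_small. auto.
Qed.

Lemma Cmod_sum_e_0_sub_RInt_le (N : nat) (X : R) : INR N <= X <= INR N + 1 ->
  Cmod (sum_n_m (fun m => e (INR m ^ 2 * 0)) 1 N - quad_integral 0 X)%C <= 1.
Proof.
  intros HX. unfold quad_integral.
  rewrite RInt_e_quad, (sum_n_m_ext _ (fun _ => RtoC 1)), Csum_const
    by first [lia | intros; rewrite Rmult_0_r; apply e_0].
  rewrite (RInt_ext (cos_quad 0) (fun _ => 1)) by (intros; unfold cos_quad; rewrite !Rmult_0_r; apply cos_0).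
  rewrite (RInt_ext (sin_quad 0) (fun _ => 0)) by (intros; unfold sin_quad; rewrite !Rmult_0_r; apply sin_0).
  rewrite !RInt_const. unfold scal; simpl. unfold mult; simpl.
  unfold Cminus, Cplus, Copp, RtoC; simpl.
  eapply Rle_trans; [apply Cmod_le_Rabs_add|].
  rewrite Nat.sub_0_r. replace (0 + - ((X - 0) * 0)) with 0 by ring. rewrite Rabs_R0, Rplus_0_r.
  apply Rabs_le. lra.
Qed.

Lemma Cmod_twisted_sum_0_sub_RInt_le (Q N : nat) (beta X : R) : (1 <= N)%nat ->
  INR N <= X <= INR N + 1 -> (2 * INR N + 1) * Rabs beta <= / 2 ->
  Cmod (twisted_sum Q N beta 0 - quad_integral beta X)%C <= 11.
Proof.
  intros HN HX Hbeta.
  assert (Hphase : forall m, beta * INR m ^ 2 - IZR 0 * INR m / INR Q = INR m ^ 2 * beta)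
    by (intros; unfold Rdiv; ring).
  unfold twisted_sum. rewrite (sum_n_m_ext _ _ _ _ (fun m => f_equal e (Hphase m))).
  destruct (Req_dec beta 0) as [->|Hb0].
  - eapply Rle_trans; [apply Cmod_sum_e_0_sub_RInt_le; auto | lra].
  - rewrite sum_e_quad_split by auto.
    pose proof (Cmod_sum_regular_part_le N beta HN Hb0 Hbeta) as Hreg.
    pose proof (Cmod_sum_singular_part_sub_RInt_le N beta X HN Hb0 HX Hbeta) as Hsing.
    replace 11 with (3 + 8) by ring.
    eapply Rle_trans; [|apply (Rplus_le_compat _ 3 _ 8 Hreg Hsing)].
    eapply Rle_trans; [|apply Cmod_triangle]. right. f_equal. as_C_eq. ring.
Qed.

(** * Summing the error coefficients *)

Lemma ln_add_inv_le n : (1 <= n)%nat -> ln (INR n) + / (INR n + 1) <= ln (INR n + 1).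
Proof.
  intros Hn. assert (H1 : 1 <= INR n) by (apply (le_INR 1); lia).
  set (x := / (INR n + 1)).
  assert (Hx : 1 - x <= exp (- x)) by (pose proof (exp_ineq1_le (- x)); lra).
  assert (Hex : exp x * exp (- x) = 1) by (rewrite <- exp_plus; replace (x + - x) with 0 by ring; apply exp_0).
  assert (He : INR n * exp x <= INR n + 1).
  { assert (1 - x = INR n / (INR n + 1)) by (unfold x; field; lra).
    pose proof (exp_pos x). pose proof (exp_pos (- x)).
    assert (INR n / (INR n + 1) * exp x <= 1) by nra.
    apply Rmult_le_reg_r with (/ (INR n + 1)); [apply Rinv_0_lt_compat; lra|].
    replace ((INR n + 1) * / (INR n + 1)) with 1 by (field; lra).
    replace (INR n * exp x * / (INR n + 1)) with (INR n / (INR n + 1) * exp x) by (field; lra). lra. }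
  replace (ln (INR n) + x) with (ln (INR n * exp x)).
  - apply ln_le; auto. pose proof (exp_pos x). nra.
  - rewrite ln_mult, ln_exp; auto; [lra | apply exp_pos].
Qed.

Lemma sum_inv_INR_le n : (1 <= n)%nat -> sum_n_m (fun b => / INR b) 1 n <= 1 + ln (INR n).
Proof.
  intros Hn. induction n as [|n IH]; [lia|]. destruct n as [|n].
  - rewrite sum_n_n. simpl. rewrite ln_1. lra.
  - rewrite sum_n_Sm by lia. specialize (IH ltac:(lia)).
    pose proof (ln_add_inv_le (S n) ltac:(lia)).
    change (plus ?a ?b) with (a + b). rewrite (S_INR (S n)). lra.
Qed.

Lemma zsum_supported {G : AbelianMonoid} (F : Z -> G) (lo hi : Z) (Q : nat) :
  (1 <= Q)%nat -> (lo < 0)%Z -> (Z.of_nat Q - 1 <= hi)%Z ->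
  (forall b, (b < 0 \/ Z.of_nat Q <= b)%Z -> F b = zero) ->
  zsum lo hi F = sum_n_m (fun b => F (Z.of_nat b)) 0 (Q - 1).
Proof.
  intros HQ Hlo Hhi HF. unfold zsum.
  set (k0 := Z.to_nat (- lo)). set (n := Z.to_nat (hi - lo)).
  rewrite (sum_n_m_Chasles _ 1 (k0 - 1) n), sum_n_m_zero_loc, plus_zero_l by (unfold k0, n in *; lia || (intros; apply HF; lia)).
  replace (S (k0 - 1)) with k0 by (unfold k0; lia).
  rewrite (sum_n_m_Chasles _ k0 (k0 + (Q - 1)) n), (sum_n_m_zero_loc _ (S (k0 + (Q - 1))) n), plus_zero_r
    by (unfold k0, n in *; lia || (intros; apply HF; lia)).
  rewrite sum_n_m_shift. apply sum_n_m_ext_loc. intros j Hj. f_equal. unfold k0. lia.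
Qed.

(* The paper's [E(b,q,beta)]; only one period [0 <= b < q] of the range of [b] is needed. *)
Definition err_coeff (Q N : nat) (beta X : R) (b : Z) : C :=
  if andb (0 <=? b)%Z (b <? Z.of_nat Q)%Z
  then (/ INR Q * (twisted_sum Q N beta b - if (b =? 0)%Z then quad_integral beta X else 0))%C
  else 0%C.

Lemma err_coeff_outside Q N beta X b : (b < 0 \/ Z.of_nat Q <= b)%Z -> err_coeff Q N beta X b = 0%C.
Proof.
  intros Hb. unfold err_coeff.
  destruct (0 <=? b)%Z eqn:E1, (b <? Z.of_nat Q)%Z eqn:E2; simpl; auto; lia.
Qed.

Lemma err_coeff_0 Q N beta X : (1 <= Q)%nat ->
  err_coeff Q N beta X 0 = (/ INR Q * (twisted_sum Q N beta 0 - quad_integral beta X))%C.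
Proof.
  intros HQ. unfold err_coeff. replace (0 <? Z.of_nat Q)%Z with true by (symmetry; apply Z.ltb_lt; lia).
  reflexivity.
Qed.

Lemma err_coeff_pos Q N beta X (b : nat) : (1 <= b < Q)%nat ->
  err_coeff Q N beta X (Z.of_nat b) = (/ INR Q * twisted_sum Q N beta (Z.of_nat b))%C.
Proof.
  intros Hb. unfold err_coeff.
  replace (andb (0 <=? Z.of_nat b)%Z (Z.of_nat b <? Z.of_nat Q)%Z) with true
    by (symmetry; apply Bool.andb_true_iff; split; [apply Z.leb_le | apply Z.ltb_lt]; lia).
  replace (Z.of_nat b =? 0)%Z with false by (symmetry; apply Z.eqb_neq; lia).
  f_equal. as_C_eq. ring.
Qed.

Lemma Cmod_inv_INR_mult (Q : nat) (z : C) : (1 <= Q)%nat -> Cmod (/ INR Q * z)%C = / INR Q * Cmod z.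
Proof.
  intros HQ. assert (0 < INR Q) by (apply lt_0_INR; lia).
  rewrite Cmod_mult, Cmod_inv, Cmod_R, Rabs_right by (lra || (intros H'; injection H'; lra)). reflexivity.
Qed.

Lemma blo_neg Q : (1 <= Q)%nat -> (blo (Z.of_nat Q) < 0)%Z.
Proof. intros. unfold blo. Z.div_mod_to_equations. lia. Qed.

Lemma bhi_ge Q : (Z.of_nat Q - 1 <= bhi (Z.of_nat Q))%Z.
Proof. unfold bhi. Z.div_mod_to_equations. lia. Qed.

Section ErrorBound.

Variables (Q N : nat) (beta X : R).
Hypothesis HQ : (1 <= Q)%nat.
Hypothesis HN : (1 <= N)%nat.
Hypothesis HX : INR N <= X <= INR N + 1.
Hypothesis Hbeta : (2 * INR N + 1) * Rabs beta <= / (2 * INR Q).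

Let INR_Q_ge_1 : 1 <= INR Q := le_INR 1 Q HQ.

Lemma Cmod_err_coeff_0_le : Cmod (err_coeff Q N beta X 0) <= 11.
Proof.
  rewrite err_coeff_0, Cmod_inv_INR_mult by auto.
  assert (Hhalf : (2 * INR N + 1) * Rabs beta <= / 2).
  { eapply Rle_trans; [exact Hbeta|]. apply Rinv_le_contravar; lra. }
  pose proof (Cmod_twisted_sum_0_sub_RInt_le Q N beta X HN HX Hhalf).
  pose proof (Cmod_ge_0 (twisted_sum Q N beta 0 - quad_integral beta X)%C).
  assert (/ INR Q <= 1) by (rewrite <- Rinv_1; apply Rinv_le_contravar; lra).
  assert (0 < / INR Q) by (apply Rinv_0_lt_compat; lra).
  nra.
Qed.

Lemma Cmod_err_coeff_pos_le (b : nat) : (1 <= b < Q)%nat ->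
  Cmod (err_coeff Q N beta X (Z.of_nat b)) <= / INR Q + 4 * / INR b + 4 * / INR (Q - b).
Proof.
  intros Hb. rewrite err_coeff_pos, Cmod_inv_INR_mult by auto.
  assert (1 <= INR b) by (apply (le_INR 1); lia).
  assert (1 <= INR (Q - b)) by (apply (le_INR 1); lia).
  apply Rle_trans with (/ INR Q * (1 + 4 * INR Q * (/ INR b + / INR (Q - b)))).
  - apply Rmult_le_compat_l; [left; apply Rinv_0_lt_compat; lra|].
    apply Cmod_twisted_sum_le; auto.
  - right. field. lra.
Qed.

Lemma sum_Cmod_err_coeff_pos_le :
  sum_n_m (fun b => Cmod (err_coeff Q N beta X (Z.of_nat b))) 1 (Q - 1) <= 9 + 8 * ln (INR Q).
Proof.
  destruct (Nat.eq_dec Q 1) as [->|HQ2].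
  - rewrite sum_n_m_zero by lia. simpl. rewrite ln_1. unfold zero; simpl. lra.
  - eapply Rle_trans; [apply sum_n_m_le_loc; intros b Hb; apply Cmod_err_coeff_pos_le; lia|].
    rewrite !Rsum_plus, sum_n_m_const, !Rsum_mult_l.
    replace (sum_n_m (fun b => / INR (Q - b)) 1 (Q - 1)) with (sum_n_m (fun b => / INR b) 1 (Q - 1)).
    2:{ rewrite <- (sum_n_m_reflect (fun b => / INR b) (Q - 1)).
        apply sum_n_m_ext_loc. intros. do 2 f_equal. lia. }
    pose proof (sum_inv_INR_le (Q - 1) ltac:(lia)).
    assert (ln (INR (Q - 1)) <= ln (INR Q)) by (apply ln_le; [apply lt_0_INR; lia | apply le_INR; lia]).
    assert (INR (S (Q - 1) - 1) * / INR Q <= 1).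
    { replace (S (Q - 1) - 1)%nat with (Q - 1)%nat by lia. rewrite minus_INR by lia. simpl.
      apply Rmult_le_reg_r with (INR Q); [lra|]. rewrite Rmult_assoc, Rinv_l by lra. lra. }
    lra.
Qed.

Lemma zsum_Cmod_err_coeff_le :
  zsum (blo (Z.of_nat Q)) (bhi (Z.of_nat Q)) (fun b => Cmod (err_coeff Q N beta X b))
  <= 28 * ln (INR Q + 2).
Proof.
  rewrite (zsum_supported (G := R_AbelianMonoid) _ _ _ Q HQ (blo_neg Q HQ) (bhi_ge Q))
    by (intros b Hb; rewrite err_coeff_outside by auto; apply Cmod_0).
  rewrite (sum_Sn_m _ 0 (Q - 1)) by lia. change (plus ?x ?y) with (x + y).
  pose proof Cmod_err_coeff_0_le. pose proof sum_Cmod_err_coeff_pos_le.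
  assert (Hln3 : 1 <= ln (INR Q + 2)).
  { apply Rle_trans with (ln 3); [|apply ln_le; lra].
    rewrite <- (ln_exp 1). apply ln_le; [apply exp_pos | apply exp_le_3]. }
  assert (ln (INR Q) <= ln (INR Q + 2)) by (apply ln_le; lra).
  simpl Z.of_nat in *. lra.
Qed.

End ErrorBound.
Lemma sum_major_arc_decomposition (Q N : nat) (a : Z) (beta X : R) : (1 <= Q)%nat ->
  sum_n_m (fun m => e (INR m ^ 2 * (IZR a / INR Q + beta))) 1 N =
  (S2 (Z.of_nat Q) a / INR Q * quad_integral beta X
   + zsum (blo (Z.of_nat Q)) (bhi (Z.of_nat Q)) (fun b => S3 (Z.of_nat Q) a b * err_coeff Q N beta X b))%C.
Proof.
  intros HQ.
  rewrite (zsum_supported (G := C_AbelianMonoid) _ _ _ Q HQ (blo_neg Q HQ) (bhi_ge Q))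
    by (intros b Hb; rewrite err_coeff_outside by auto; apply Cmult_0_r).
  rewrite sum_quadratic_split by auto.
  rewrite !(sum_Sn_m _ 0 (Q - 1)) by lia. change (plus ?x ?y) with (x + y)%C.
  rewrite (sum_n_m_ext_loc (fun b => S3 (Z.of_nat Q) a (Z.of_nat b) * err_coeff Q N beta X (Z.of_nat b))%C
             (fun b => S3 (Z.of_nat Q) a (Z.of_nat b) * (/ INR Q * twisted_sum Q N beta (Z.of_nat b)))%C)
    by (intros b Hb; rewrite err_coeff_pos by lia; reflexivity).
  change (Z.of_nat 0) with 0%Z. rewrite err_coeff_0 by auto.
  unfold S2. as_C_eq. field.
  intros H. injection H as H. apply not_0_INR in H; [auto | lia].
Qed.

Lemma floorR_spec x : IZR (floorR x) <= x < IZR (floorR x) + 1.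
Proof. unfold floorR. destruct (archimed x). rewrite minus_IZR. simpl. lra. Qed.

Lemma floorR_to_nat_bounds X : 1 <= X ->
  (1 <= Z.to_nat (floorR X))%nat /\ INR (Z.to_nat (floorR X)) <= X <= INR (Z.to_nat (floorR X)) + 1.
Proof.
  intros HX. pose proof (floorR_spec X) as Hf.
  assert (H1 : (0 < floorR X)%Z) by (apply lt_IZR; simpl; lra).
  rewrite INR_IZR_INZ, Z2Nat.id by lia. split; [lia | lra].
Qed.

Lemma major_arc_width_bound (X beta : R) (q : Z) : 3 <= X -> (1 <= q)%Z ->
  Rabs beta <= 1 / (IZR q * IZR (floorR (5 * X))) ->
  (2 * INR (Z.to_nat (floorR X)) + 1) * Rabs beta <= / (2 * IZR q).
Proof.
  intros HX Hq Hbeta.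
  destruct (floorR_to_nat_bounds X ltac:(lra)) as [_ [HN _]].
  pose proof (floorR_spec (5 * X)) as HP.
  set (P := IZR (floorR (5 * X))) in *. set (N := INR (Z.to_nat (floorR X))) in *.
  assert (Hq1 : 1 <= IZR q) by (apply IZR_le; lia).
  pose proof (Rabs_pos beta).
  assert (HqP : 0 < IZR q * P) by nra.
  assert (Hb : Rabs beta * (IZR q * P) <= 1).
  { apply Rmult_le_reg_r with (/ (IZR q * P)); [apply Rinv_0_lt_compat; lra|].
    rewrite Rmult_assoc, Rinv_r, Rmult_1_r by lra. lra. }
  assert (HNP : 2 * (2 * N + 1) <= P) by lra.
  assert (0 <= Rabs beta * IZR q) by nra.
  apply Rmult_le_reg_r with (2 * IZR q); [lra|].
  rewrite Rinv_l by lra. nra.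
Qed.

Theorem lemma4p1 :
  exists Cst : R, exists X0 : R, forall X : R, X0 <= X ->
  forall (q : Z) (beta : R),
    (1 <= q)%Z ->
    (q <= floorR (5 * X))%Z ->
    Rabs beta <= 1 / (IZR q * IZR (floorR (5 * X))) ->
    exists E : Z -> C,
      zsum (blo q) (bhi q) (fun b => Cmod (E b)) <= Cst * ln (IZR q + 2) /\
      forall a : Z, Z.gcd a q = 1%Z ->
        fX X (IZR a / IZR q + beta) =
        Cplus (Cmult (Cdiv (S2 q a) (RtoC (IZR q)))
                     (RInt (V := C_R_CompleteNormedModule)
                           (fun x => e (x ^ 2 * beta)) 0 X))
              (zsum (blo q) (bhi q) (fun b => Cmult (S3 q a b) (E b))).
Proof.
  exists 28, 3. intros X HX q beta Hq _ Hbeta.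
  pose proof (major_arc_width_bound X beta q HX Hq Hbeta) as Hsmall.
  destruct (floorR_to_nat_bounds X ltac:(lra)) as [HN HXN].
  set (N := Z.to_nat (floorR X)) in *.
  set (Q := Z.to_nat q).
  assert (HQ : (1 <= Q)%nat) by lia.
  replace q with (Z.of_nat Q) in * by lia. rewrite <- INR_IZR_INZ in *.
  exists (err_coeff Q N beta X). split.
  - apply zsum_Cmod_err_coeff_le; auto.
  - intros a _. apply sum_major_arc_decomposition. exact HQ.
Qed.
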